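(* Fix a leader policy $\pi$ and arbitrary functions $\tilde Q_h:\mathcal S\times\mathcal B\to\mathbb R$, $h\in[H]$. Define $\tilde V_h(s)=\eta^{-1}\log\sum_{b\in\mathcal B}\exp(\eta\tilde Q_h(s,b))$, $\tilde A_h=\tilde Q_h-\tilde V_h$, $\tilde\nu_h(b\mid s)=\exp(\eta\tilde A_h(s,b))$, $\tilde V_{H+1}=0$, and $$\tilde\Delta_h^{(1)}(s_h,b_h)=(\mathbb E_{s_h,b_h}-\mathbb E_{s_h})\Bigl[\sum_{l=h}^H\gamma^{l-h}\bigl(\tilde Q_l-r_l^\pi-\gamma P_l^\pi\tilde V_{l+1}\bigr)(s_l,b_l)\Bigr].$$ Then $$\sum_{h=1}^HH\,\mathbb E\bigl[\|\tilde\nu_h(\cdot\mid s_h)-\nu_h^\pi(\cdot\mid s_h)\|_1\bigr]\le C^{(0)}\sum_{h=1}^H\mathbb E\bigl[|\tilde\Delta_h^{(1)}(s_h,b_h)|\bigr]+C^{(1)}\sum_{h=1}^H\mathbb E\bigl[|(\tilde A_h-A_h^\pi)(s_h,b_h)|^2\bigr]$$ and $$\sum_{h=1}^HH\,\mathbb E\bigl[\|\tilde\nu_h(\cdot\mid s_h)-\nu_h^\pi(\cdot\mid s_h)\|_1\bigr]\le C^{(0)}\sum_{h=1}^H\mathbb E\bigl[|\tilde\Delta_h^{(1)}(s_h,b_h)|\bigr]+C^{(2)}\max_{h\in[H]}\mathbb E\bigl[|(\tilde Q_h-r_h^\pi-\gamma P_h^\pi\tilde V_{h+1})(s_h,b_h)|^2\bigr],$$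 where $C^{(0)}=2\eta H$, $C^{(1)}=\eta^2H(1+4\,\mathrm{eff}_H(\gamma))e^{2\eta B_A}$, $C^{(2)}=2\eta^2H^2e^{6\eta B_A}(1+4\,\mathrm{eff}_H(\gamma))\,\mathrm{eff}_H(e^{2\eta B_A}\gamma)^2$.
   Context: Episodic leader–follower Markov game (true model): state space $\mathcal S$, action sets $\mathcal A,\mathcal B$, horizon $H$, transitions $P_h(\cdot\mid s,a,b)$, follower rewards $r_h\in[0,1]$. Leader policy $\pi_h(\cdot\mid s,b)\in\Delta(\mathcal A)$; $r_h^\pi(s,b)=\sum_a\pi_h(a\mid s,b)r_h(s,a,b)$, $P_h^\pi(s'\mid s,b)=\sum_a\pi_h(a\mid s,b)P_h(s'\mid s,a,b)$, $(P_h^\pi f)(s,b)=\mathbb E_{s'\sim P_h^\pi(\cdot\mid s,b)}f(s')$. With $\eta>0$, $\gamma\in[0,1]$: $V_{H+1}^\pi=0$, $Q_h^\pi=r_h^\pi+\gamma P_h^\pi V_{h+1}^\pi$, $V_h^\pi(s)=\eta^{-1}\log\sum_b e^{\eta Q_h^\pi(s,b)}$, $A_h^\pi=Q_h^\pi-V_h^\pi$, quantal response $\nu_h^\pi(b\mid s)=\exp(\eta A_h^\pi(s,b))$. $\mathbb E$ is over a trajectory of $(\pi,\nu^\pi)$ (with $b_h\sim\nu_h^\pi(\cdot\mid s_h)$, $a_h\sim\pi_h(\cdot\mid s_h,b_h)$, $s_{h+1}\sim P_h$); $\mathbb E_{s_h}$, $\mathbb E_{s_h,b_h}$ are the conditional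 expectations given $s_h$, resp. $(s_h,b_h)$. $\mathrm{eff}_H(x)=(1-x^H)/(1-x)$ ($=H$ if $x=1$). Standing assumption: $B_A>0$ is a constant bounding in absolute value all follower advantage, $Q$- and $V$-functions considered, both the true ones and the estimated ones $\tilde Q_h,\tilde V_h,\tilde A_h$ (the paper's value for the true functions is $B_A=(1+\mathrm{eff}_H(\gamma))(\eta^{-1}\log|\mathcal B|+1)$). *)

From HB Require Import structures.
From mathcomp Require Import all_boot all_order all_algebra.
From mathcomp Require Import all_classical all_reals all_analysis.
Set Implicit Arguments. Unset Strict Implicit. Unset Printing Implicit Defensive.
Import Order.TTheory GRing.Theory Num.Theory.
Local Open Scope ring_scope.

(* Steps are 0-indexed: h = 0, ..., H-1 (paper: 1, ..., H).
   V at index H (paper: H+1) is 0. *)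
Section LeaderFollower.
Variables (R : realType) (S A B : finType) (H : nat) (eta gamma : R).
(* P h s a b s' = P_h(s' | s, a, b) *)
Variable P : nat -> S -> A -> B -> S -> R.
Variable r : nat -> S -> A -> B -> R.
(* pi h s b a = pi_h(a | s, b) *)
Variable pi : nat -> S -> B -> A -> R.
Variable rho : S -> R.

Definition lse (f : B -> R) : R := eta^-1 * ln (\sum_b expR (eta * f b)).

Definition rpi h s b : R := \sum_a pi h s b a * r h s a b.
Definition Ppi h s b s' : R := \sum_a pi h s b a * P h s a b s'.
Definition Pop h (f : S -> R) s b : R := \sum_s' Ppi h s b s' * f s'.

(* Vrem n = V^pi at step H - n (n remaining steps) *)
Fixpoint Vrem (n : nat) (s : S) : R :=
  match n with
  | 0 => 0
  | n'.+1 => lse (fun b => rpi (H - n'.+1) s b + gamma * Pop (H - n'.+1) (Vrem n') s b)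
  end.

Definition Vpi h s : R := Vrem (H - h) s.
Definition Qpi h s b : R := rpi h s b + gamma * Pop h (Vpi h.+1) s b.
Definition Api h s b : R := Qpi h s b - Vpi h s.
Definition nupi h s b : R := expR (eta * Api h s b).

(* marginal law of s_h along a trajectory of (pi, nu^pi) *)
Fixpoint dpi (h : nat) : S -> R :=
  match h with
  | 0 => rho
  | h'.+1 => fun s' => \sum_s dpi h' s * \sum_b nupi h' s b * Ppi h' s b s'
  end.

Definition Esb h (f : S -> B -> R) : R := \sum_s dpi h s * \sum_b nupi h s b * f s b.
Definition Es h (f : S -> R) : R := \sum_s dpi h s * f s.

(* condsb k h f s b = E_{s_h = s, b_h = b}[ f(s_{h+k}, b_{h+k}) ] *)
Fixpoint condsb (k h : nat) (f : S -> B -> R) (s : S) (b : B) : R :=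
  match k with
  | 0 => f s b
  | k'.+1 => \sum_s' Ppi h s b s' *
               \sum_b' nupi h.+1 s' b' * condsb k' h.+1 f s' b'
  end.
Definition conds (k h : nat) (f : S -> B -> R) (s : S) : R :=
  \sum_b nupi h s b * condsb k h f s b.

Definition Vt (Qt : nat -> S -> B -> R) h s : R := if (h < H)%N then lse (Qt h s) else 0.
Definition At (Qt : nat -> S -> B -> R) h s b : R := Qt h s b - Vt Qt h s.
Definition nut (Qt : nat -> S -> B -> R) h s b : R := expR (eta * At Qt h s b).

Definition gres (Qt : nat -> S -> B -> R) h s b : R :=
  Qt h s b - rpi h s b - gamma * Pop h (Vt Qt h.+1) s b.

Definition Delta1 (Qt : nat -> S -> B -> R) h s b : R :=
  \sum_(h <= l < H) gamma ^+ (l - h) *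
     (condsb (l - h) h (gres Qt l) s b - conds (l - h) h (gres Qt l) s).

End LeaderFollower.

Definition eff {R : realType} (n : nat) (x : R) : R :=
  if x == 1 then n%:R else (1 - x ^+ n) / (1 - x).

(* Write nu~ = nu^pi * exp (eta * dA) with dA = A~ - A^pi; as |eta * dA| <= c := 2 eta B_A,
   a second-order Taylor bound on exp gives
   ||nu~ - nu^pi||_1 <= E_nu [eta |dA| + e^c / 2 * eta^2 dA^2].
   The error dQ = Q~ - Q^pi obeys dQ_h = g_h + gamma P^pi dV_(h+1), where g is the Bellman
   residual of Q~, and dV_h = E_nu[dQ_h] + kappa_h with eta * kappa_h = KL(nu^pi_h || nu~_h),
   which lies between 0 and eta^2 e^c / 2 * E_nu[dA_h^2].  Unrolling, dQ + kappa is the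
   discounted future sum of g + kappa, so dA = dQ - dV is Delta^(1) plus a centred discounted
   sum of kappa, minus kappa; summing over h gives the first bound.  For the second,
   |dV_h| <= e^c E_nu|dQ_h| turns the recursion into |dQ_h| <= sum_l (e^c gamma)^(l-h) E|g_l|,
   and Cauchy-Schwarz plus Jensen bound E[dA^2] <= 4 e^(2c) E[dQ^2] by max_l E[g_l^2]. *)

From HB Require Import structures.
From mathcomp Require Import all_boot all_order all_algebra.
From mathcomp Require Import all_classical all_reals all_analysis.
From mathcomp Require Import ring lra zify.
Import Order.TTheory GRing.Theory Num.Theory numFieldNormedType.Exports.
Local Open Scope ring_scope.

Lemma nat_backward_ind (n : nat) (Pr : nat -> Prop) :
  (forall h, (n <= h)%N -> Pr h) -> (forall h, (h < n)%N -> Pr h.+1 -> Pr h) ->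
  forall h, Pr h.
Proof.
move=> base step h; move Enh: (n - h)%N => k; elim: k h Enh => [|k IH] h Enh.
  by apply: base; rewrite -subn_eq0 Enh.
by apply: step; [rewrite -subn_gt0 Enh | apply: IH; rewrite subnS Enh].
Qed.

Lemma expR_remainder_bounds (R : realType) (c y : R) : `|y| <= c ->
  0 <= expR y - 1 - y <= expR c / 2 * y ^+ 2.
Proof.
move=> yc; set K := expR c.
have K1 : 1 <= K by rewrite -expR0 ler_expR (le_trans _ yc).
rewrite subr_ge0 lerBrDr addrC expR_ge1Dx /=.
pose phi x := K / 2 * x ^+ 2 - (expR x - 1 - x).
have dphi (x : R) : is_derive x 1 phi (K * x - (expR x - 1)).
  by apply: is_derive_eq; rewrite /= subr0 /GRing.scale /=; field.
have phi_cont : continuous (phi : R -> R).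
  by move=> x; apply/differentiable_continuous/derivable1_diffP; apply: ex_derive; exact: dphi.
have phi'E (x : R) : derive1 phi x = K * x - (expR x - 1) by rewrite derive1E derive_val.
suff : phi 0 <= phi y.
  by rewrite /phi expR0 expr0n /= mulr0 subrr !subr0 subr_ge0.
have [y_ge0|y_lt0] := leP 0 y.
- apply: (@ger0_derive1_ndecr _ phi 0 y _ _ _ 0 y) => //.
  + move=> x; rewrite in_itv /= phi'E => /andP[x_gt0 x_lty].
    (* [expR x - 1 <= x * expR x <= x * K] *)
    have := expR_ge1Dx (- x); have := expRxMexpNx_1 x; have := expR_gt0 x.
    have : expR x <= K by rewrite ler_expR (le_trans _ yc) // ger0_norm // ltW.
    nra.
  + exact: continuous_subspaceT.
- apply: (@ler0_derive1_nincrNy _ phi 0 _ _ _ y 0) => //; last exact: ltW.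
  + move=> x; rewrite in_itv /= phi'E => x_lt0.
    have := expR_ge1Dx x; nra.
  + exact: continuous_subspaceT.
Qed.

Lemma sqr_wsum_le {R : realFieldType} {I : Type} (r : seq I) (w a : I -> R) :
  (forall i, 0 <= w i) ->
  (\sum_(i <- r) w i * a i) ^+ 2 <= (\sum_(i <- r) w i) * \sum_(i <- r) w i * a i ^+ 2.
Proof.
move=> w_ge0; rewrite -subr_ge0.
set T := \sum_(i <- r) \sum_(j <- r) w i * w j * (a j ^+ 2 - a i * a j).
have T_gap : T = (\sum_(i <- r) w i) * (\sum_(i <- r) w i * a i ^+ 2)
                 - (\sum_(i <- r) w i * a i) ^+ 2.
  rewrite /T expr2 !mulr_suml -sumrB; apply: eq_bigr => i _.
  by rewrite !mulr_sumr -sumrB; apply: eq_bigr => j _; ring.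
have T_sym : T = \sum_(i <- r) \sum_(j <- r) w i * w j * (a i ^+ 2 - a i * a j).
  by rewrite /T exchange_big; apply: eq_bigr => i _; apply: eq_bigr => j _; ring.
(* [T + T] is [\sum_(i, j) w i * w j * (a i - a j) ^+ 2] *)
suff : 0 <= T + T by rewrite -T_gap; lra.
rewrite {1}T_sym /T -big_split sumr_ge0 // => i _.
rewrite -big_split sumr_ge0 //= => j _.
rewrite -mulrDr mulr_ge0 ?mulr_ge0 //.
by have := sqr_ge0 (a i - a j); rewrite sqrrB; lra.
Qed.

Lemma jensen_sqr {R : realFieldType} {I : finType} {p a : I -> R} :
  (forall i, 0 <= p i) -> \sum_i p i = 1 ->
  (\sum_i p i * a i) ^+ 2 <= \sum_i p i * a i ^+ 2.
Proof.
by move=> p_ge0 p_sum1; have := sqr_wsum_le (index_enum I) p a p_ge0; rewrite p_sum1 mul1r.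
Qed.

Lemma effE (R : realType) (n : nat) (x : R) : eff n x = \sum_(i < n) x ^+ i.
Proof.
rewrite /eff; case: eqP => [->|/eqP x_neq1].
  by under eq_bigr do rewrite expr1n; rewrite sumr_const card_ord.
have x1_neq0 : 1 - x != 0 by rewrite subr_eq0 eq_sym.
apply: (mulfI x1_neq0); rewrite mulrC divfK //.
by rewrite -[1 - x ^+ n]opprB subrX1 -mulNr opprB.
Qed.

Section GeometricSums.
Context {R : realType}.
Variables (n : nat) (x : R).
Hypothesis x_ge0 : 0 <= x.

Lemma eff_ge0 : 0 <= eff n x.
Proof. by rewrite effE sumr_ge0 // => i _; rewrite exprn_ge0. Qed.

Lemma eff_ge1 : (0 < n)%N -> 1 <= eff n x.
Proof.
case: n => // m _; rewrite effE big_ord_recl expr0 lerDl.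
by rewrite sumr_ge0 // => i _; rewrite exprn_ge0.
Qed.

Lemma sum_geom_le_eff m : (m <= n)%N -> \sum_(i < m) x ^+ i <= eff n x.
Proof.
move=> m_le_n; rewrite effE (big_ord_widen n (fun i => x ^+ i) m_le_n).
rewrite [X in _ <= X](bigID (fun i : 'I_n => (i < m)%N)) /= lerDl.
by rewrite sumr_ge0 // => i _; rewrite exprn_ge0.
Qed.

Lemma sum_shifted_geom_le_eff h : (h <= n)%N ->
  \sum_(h <= l < n) x ^+ (l - h) <= eff n x.
Proof.
move=> h_le_n; rewrite -{1}[h]add0n big_addn big_mkord.
under eq_bigr do rewrite addnK.
exact: sum_geom_le_eff (leq_subr h n).
Qed.

Lemma sum_discounted_le (a : nat -> R) : (forall l, (l < n)%N -> 0 <= a l) ->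
  \sum_(0 <= h < n) \sum_(h <= l < n) x ^+ (l - h) * a l
    <= eff n x * \sum_(0 <= l < n) a l.
Proof.
move=> a_ge0.
under eq_big_nat => h _ do rewrite (@big_nat_widenl _ _ _ h 0 n predT _ (leq0n h)).
rewrite (exchange_big_dep_nat predT) //= mulr_sumr.
rewrite big_nat_cond [X in _ <= X]big_nat_cond.
apply: ler_sum => l /andP[/andP[_ l_lt_n] _].
rewrite -mulr_suml ler_wpM2r ?a_ge0 //.
have -> : \sum_(0 <= h < n | (h <= l)%N) x ^+ (l - h) = \sum_(0 <= h < l.+1) x ^+ (l - h).
  by rewrite (big_nat_widen _ _ _ predT _ l_lt_n).
rewrite big_nat_rev big_mkord (eq_bigr (fun i : 'I_l.+1 => x ^+ i)) => [|i _].
  exact: sum_geom_le_eff.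
by rewrite add0n subSS subKn // -ltnS.
Qed.

End GeometricSums.

(** * Perturbation of the softmax *)

Section Softmax.
Context {R : realType} {B : finType}.
Variable eta : R.
Hypothesis eta_gt0 : 0 < eta.

Definition softmax (f : B -> R) (b : B) : R := expR (eta * (f b - lse eta f)).

(* [eta * lse_gap f g] is the Kullback-Leibler divergence KL(softmax f || softmax g). *)
Definition lse_gap (f g : B -> R) : R :=
  lse eta g - lse eta f - \sum_b softmax f b * (g b - f b).

Lemma softmax_ge0 f b : 0 <= softmax f b.
Proof. exact: expR_ge0. Qed.

Variable b0 : B.

Lemma softmax_sum f : \sum_b softmax f b = 1.
Proof.
set Z := \sum_b expR (eta * f b).
have Z_gt0 : 0 < Z.
  by rewrite /Z (bigD1 b0) //= ltr_pwDl ?expR_gt0 // sumr_ge0 // => b _; rewrite expR_ge0.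
rewrite -(divff (lt0r_neq0 Z_gt0)) mulr_suml; apply: eq_bigr => b _.
by rewrite /softmax mulrBr expRB /lse mulrA mulfV ?gt_eqF // mul1r lnK.
Qed.

Local Notation dadv f g b := (g b - lse eta g - (f b - lse eta f)).

Lemma softmax_ratio f g b : softmax g b = softmax f b * expR (eta * dadv f g b).
Proof. by rewrite -expRD; congr expR; ring. Qed.

Lemma sum_softmax_dadv f g : \sum_b softmax f b * dadv f g b = - lse_gap f g.
Proof.
rewrite /lse_gap (eq_bigr (fun b => softmax f b * (g b - f b)
                                  - softmax f b * (lse eta g - lse eta f))).
  by rewrite sumrB -mulr_suml softmax_sum mul1r; ring.
by move=> b _; ring.
Qed.

Lemma lse_gapE f g :
  eta * lse_gap f g = \sum_b softmax f b * (expR (eta * dadv f g b) - 1 - eta * dadv f g b).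
Proof.
rewrite (eq_bigr (fun b => softmax g b - softmax f b - eta * (softmax f b * dadv f g b))).
  by rewrite !sumrB !softmax_sum -mulr_sumr sum_softmax_dadv; ring.
by move=> b _; rewrite (softmax_ratio f g); ring.
Qed.

Lemma lse_gap_ge0 f g : 0 <= lse_gap f g.
Proof.
rewrite -(pmulr_rge0 _ eta_gt0) lse_gapE sumr_ge0 // => b _.
by rewrite mulr_ge0 ?softmax_ge0 // subr_ge0 lerBrDr addrC expR_ge1Dx.
Qed.

Section BoundedAdvantageGap.
Variables (f g : B -> R) (c : R).
Hypothesis dadv_bound : forall b, `|eta * dadv f g b| <= c.
Local Notation p := (softmax f).
Local Notation q := (softmax g).

Let expR_c_ge1 : 1 <= expR c.
Proof. by rewrite -expR0 ler_expR (le_trans _ (dadv_bound b0)). Qed.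

Lemma lse_gap_le : lse_gap f g <= eta / 2 * expR c * \sum_b p b * dadv f g b ^+ 2.
Proof.
rewrite -(ler_pM2l eta_gt0) lse_gapE !mulr_sumr; apply: ler_sum => b _.
have /andP[_ rem_le] := @expR_remainder_bounds _ _ _ (dadv_bound b).
apply: le_trans (ler_wpM2l (softmax_ge0 f b) rem_le) _.
by rewrite exprMn; lra.
Qed.

Lemma softmax_le b : q b <= expR c * p b.
Proof.
rewrite (softmax_ratio f g) mulrC ler_wpM2r ?softmax_ge0 // ler_expR.
exact: le_trans (ler_norm _) (dadv_bound b).
Qed.

Lemma norm_lse_diff_le :
  `|lse eta g - lse eta f| <= expR c * \sum_b p b * `|g b - f b|.
Proof.
have lse_diff_ge : \sum_b p b * (g b - f b) <= lse eta g - lse eta f.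
  by have := lse_gap_ge0 f g; rewrite subr_ge0.
(* the previous inequality with [f] and [g] swapped *)
have lse_diff_le : lse eta g - lse eta f <= \sum_b q b * (g b - f b).
  have := lse_gap_ge0 g f; rewrite /lse_gap subr_ge0 -[lse eta f - _]opprB lerNr -sumrN.
  by under eq_bigr do rewrite -mulrN opprB.
have sum_ge0 : 0 <= \sum_b p b * `|g b - f b|.
  by rewrite sumr_ge0 // => b _; rewrite mulr_ge0 ?softmax_ge0.
rewrite ler_norml; apply/andP; split.
  apply: le_trans lse_diff_ge; rewrite lerNl -sumrN.
  apply: le_trans (ler_peMl sum_ge0 expR_c_ge1); apply: ler_sum => b _.
  by rewrite -mulrN ler_wpM2l ?softmax_ge0 // -normrN ler_norm.
apply: le_trans lse_diff_le _; rewrite mulr_sumr; apply: ler_sum => b _.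
rewrite mulrA; apply: le_trans (ler_wpM2r (normr_ge0 _) (softmax_le b)).
by rewrite ler_wpM2l ?softmax_ge0 // ler_norm.
Qed.

Lemma softmax_l1_le :
  \sum_b `|q b - p b| <=
  \sum_b p b * (eta * `|dadv f g b| + expR c / 2 * eta ^+ 2 * dadv f g b ^+ 2).
Proof.
apply: ler_sum => b _.
rewrite (softmax_ratio f g) -{2}[p b]mulr1 -mulrBr normrM ger0_norm ?softmax_ge0 //.
rewrite ler_wpM2l ?softmax_ge0 //.
have /andP[rem_ge0 rem_le] := @expR_remainder_bounds _ _ _ (dadv_bound b).
rewrite -[expR _ - 1](subrK (eta * dadv f g b)).
apply: le_trans (ler_normD _ _) _.
by rewrite ger0_norm // normrM gtr0_norm //; rewrite exprMn in rem_le; lra.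
Qed.

Lemma sum_softmax_sqr_dadv_le :
  \sum_b p b * dadv f g b ^+ 2 <= 4 * expR c ^+ 2 * \sum_b p b * (g b - f b) ^+ 2.
Proof.
set e := lse eta g - lse eta f; set D := \sum_b p b * (g b - f b) ^+ 2.
have D_ge0 : 0 <= D by rewrite sumr_ge0 // => b _; rewrite mulr_ge0 ?softmax_ge0 ?sqr_ge0.
have S1_le : (\sum_b p b * `|g b - f b|) ^+ 2 <= D.
  rewrite (_ : D = \sum_b p b * `|g b - f b| ^+ 2).
    exact: jensen_sqr (softmax_ge0 f) (softmax_sum f).
  by apply: eq_bigr => b _; rewrite real_normK ?num_real.
have e2_le : e ^+ 2 <= expR c ^+ 2 * D.
  have e_le := norm_lse_diff_le; rewrite -/e in e_le.
  rewrite -real_normK ?num_real //.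
  apply: le_trans (_ : _ <= (expR c * \sum_b p b * `|g b - f b|) ^+ 2) _.
    by apply: lerXn2r; rewrite ?nnegrE ?(le_trans (normr_ge0 _) e_le).
  by rewrite exprMn ler_wpM2l ?exprn_ge0 ?expR_ge0.
have dadv2_le : \sum_b p b * dadv f g b ^+ 2 <= \sum_b p b * (2 * (g b - f b) ^+ 2 + 2 * e ^+ 2).
  apply: ler_sum => b _; rewrite ler_wpM2l ?softmax_ge0 // /e.
  by have := sqr_ge0 (g b - f b + (lse eta g - lse eta f)); nra.
have sum_split : \sum_b p b * (2 * (g b - f b) ^+ 2 + 2 * e ^+ 2) = 2 * D + 2 * e ^+ 2.
  rewrite (eq_bigr (fun b => 2 * (p b * (g b - f b) ^+ 2) + p b * (2 * e ^+ 2))).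
    by rewrite big_split -mulr_sumr -mulr_suml softmax_sum mul1r.
  by move=> b _; ring.
rewrite sum_split in dadv2_le.
have c2_ge1 : 1 <= expR c ^+ 2 by rewrite exprn_ege1.
nra.
Qed.

End BoundedAdvantageGap.
End Softmax.

(** * Expectations along a trajectory of (pi, nu^pi) *)

Section Trajectory.
Context {R : realType} {S A B : finType} {H : nat} {eta gamma : R}.
Context {P : nat -> S -> A -> B -> S -> R} {r : nat -> S -> A -> B -> R}.
Context { pi : nat -> S -> B -> A -> R } { rho : S -> R }.
Hypotheses (eta_gt0 : 0 < eta) (gamma_ge0 : 0 <= gamma)
  (P_ge0 : forall h s a b s', (h < H)%N -> 0 <= P h s a b s')
  (P_sum1 : forall h s a b, (h < H)%N -> \sum_s' P h s a b s' = 1)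
  (pi_ge0 : forall h s b a, (h < H)%N -> 0 <= pi h s b a)
  (pi_sum1 : forall h s b, (h < H)%N -> \sum_a pi h s b a = 1)
  (rho_ge0 : forall s, 0 <= rho s).
Variable b0 : B.

Local Notation Q := (Qpi H eta gamma P r pi).
Local Notation V := (Vpi H eta gamma P r pi).
Local Notation nu := (nupi H eta gamma P r pi).
Local Notation mu := (dpi H eta gamma P r pi rho).
Local Notation E := (Esb H eta gamma P r pi rho).
Local Notation Csb := (condsb H eta gamma P r pi).

Lemma Ppi_ge0 h s b : (h < H)%N -> forall s', 0 <= Ppi P pi h s b s'.
Proof. by move=> hH s'; rewrite sumr_ge0 // => a _; rewrite mulr_ge0 ?pi_ge0 ?P_ge0. Qed.

Lemma Ppi_sum1 h s b : (h < H)%N -> \sum_s' Ppi P pi h s b s' = 1.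
Proof.
move=> hH; rewrite exchange_big /= -(pi_sum1 h s b hH); apply: eq_bigr => a _.
by rewrite -mulr_sumr P_sum1 // mulr1.
Qed.

Lemma Vpi_lse h s : (h < H)%N -> V h s = lse eta (Q h s).
Proof.
by move=> hH; rewrite /Vpi -(subnSK hH) /= subnSK // subKn // ltnW.
Qed.

Lemma nupi_softmax h s b : (h < H)%N -> nu h s b = softmax eta (Q h s) b.
Proof. by move=> hH; rewrite /nupi /Api Vpi_lse. Qed.

Lemma nupi_ge0 h s b : 0 <= nu h s b.
Proof. rewrite /nupi; exact: expR_ge0. Qed.

Lemma nupi_sum1 h s : (h < H)%N -> \sum_b nu h s b = 1.
Proof.
move=> hH; under eq_bigr do rewrite nupi_softmax //.
exact: softmax_sum eta eta_gt0 b0 _.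
Qed.

Lemma dpi_ge0 h s : (h <= H)%N -> 0 <= mu h s.
Proof.
elim: h s => [|h IH] s hH /=; first exact: rho_ge0.
apply: sumr_ge0 => s' _; apply: mulr_ge0; first exact: IH (ltnW hH).
by apply: sumr_ge0 => b _; apply: mulr_ge0; [exact: nupi_ge0 | exact: Ppi_ge0].
Qed.

Lemma condsbD k h f1 f2 s b :
  Csb k h (fun s b => f1 s b + f2 s b) s b = Csb k h f1 s b + Csb k h f2 s b.
Proof.
elim: k h s b => [|k IH] h s b //=.
rewrite -big_split /=; apply: eq_bigr => s' _; rewrite -mulrDr; congr (_ * _).
by rewrite -big_split /=; apply: eq_bigr => b' _; rewrite IH mulrDr.
Qed.

Lemma condsb_ge0 k h f s b : (h + k <= H)%N -> (forall s b, 0 <= f s b) ->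
  0 <= Csb k h f s b.
Proof.
elim: k h s b => [|k IH] h s b hkH f_ge0 /=; first exact: f_ge0.
apply: sumr_ge0 => s' _; apply: mulr_ge0; first by apply: Ppi_ge0; lia.
apply: sumr_ge0 => b' _; apply: mulr_ge0; first exact: nupi_ge0.
by apply: IH => //; lia.
Qed.

Lemma sqr_condsb_le k h f s b : (h + k < H)%N ->
  Csb k h f s b ^+ 2 <= Csb k h (fun s b => f s b ^+ 2) s b.
Proof.
elim: k h s b => [|k IH] h s b hkH /=; first exact: lexx.
have hH : (h < H)%N by lia.
apply: le_trans (jensen_sqr (Ppi_ge0 _ s b hH) (Ppi_sum1 _ s b hH)) _.
apply: ler_sum => s' _; apply: ler_wpM2l; first exact: Ppi_ge0.
have h1H : (h.+1 < H)%N by lia.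
apply: le_trans (jensen_sqr (nupi_ge0 _ _) (nupi_sum1 _ s' h1H)) _.
apply: ler_sum => b' _; apply: ler_wpM2l; first exact: nupi_ge0.
by apply: IH; lia.
Qed.

Lemma Esb_le h F G : (h <= H)%N -> (forall s b, F s b <= G s b) -> E h F <= E h G.
Proof.
move=> hH FG; apply: ler_sum => s _; apply: ler_wpM2l; first exact: dpi_ge0.
by apply: ler_sum => b _; apply: ler_wpM2l; [exact: nupi_ge0 | exact: FG].
Qed.

Lemma Esb_ge0 h F : (h <= H)%N -> (forall s b, 0 <= F s b) -> 0 <= E h F.
Proof.
move=> hH F_ge0; apply: sumr_ge0 => s _; apply: mulr_ge0; first exact: dpi_ge0.
by apply: sumr_ge0 => b _; apply: mulr_ge0; [exact: nupi_ge0 | exact: F_ge0].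
Qed.

Lemma EsbD h F G : E h (fun s b => F s b + G s b) = E h F + E h G.
Proof.
rewrite /Esb -big_split /=; apply: eq_bigr => s _; rewrite -mulrDr; congr (_ * _).
by rewrite -big_split /=; apply: eq_bigr => b _; rewrite mulrDr.
Qed.

Lemma EsbZ h a F : E h (fun s b => a * F s b) = a * E h F.
Proof.
rewrite /Esb mulr_sumr; apply: eq_bigr => s _; rewrite mulrCA; congr (_ * _).
by rewrite mulr_sumr; apply: eq_bigr => b _; rewrite mulrCA.
Qed.

Lemma Esb_sum (I : Type) (l : seq I) h (F : I -> S -> B -> R) :
  E h (fun s b => \sum_(i <- l) F i s b) = \sum_(i <- l) E h (F i).
Proof.
rewrite /Esb [RHS]exchange_big; apply: eq_bigr => s _ /=; rewrite -mulr_sumr.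
congr (_ * _); rewrite [RHS]exchange_big; apply: eq_bigr => b _.
by rewrite mulr_sumr.
Qed.

Lemma Esb_ext h F G : (forall s b, F s b = G s b) -> E h F = E h G.
Proof.
by move=> FG; apply: eq_bigr => s _; congr (_ * _); apply: eq_bigr => b _; rewrite FG.
Qed.

Lemma Esb_condsbS k h f : E h (Csb k.+1 h f) = E h.+1 (Csb k h.+1 f).
Proof.
rewrite /Esb /=.
set X := fun s' => \sum_b' nu h.+1 s' b' * Csb k h.+1 f s' b'.
transitivity (\sum_s \sum_b \sum_s' mu h s * nu h s b * Ppi P pi h s b s' * X s').
  apply: eq_bigr => s _; rewrite mulr_sumr; apply: eq_bigr => b _.
  by rewrite mulrA mulr_sumr; apply: eq_bigr => s' _; rewrite mulrA.
rewrite [RHS](eq_bigr (fun s' => \sum_s \sum_b mu h s * nu h s b * Ppi P pi h s b s' * X s')).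
  by rewrite [RHS]exchange_big; apply: eq_bigr => s _; rewrite exchange_big.
move=> s' _; rewrite mulr_suml; apply: eq_bigr => s _.
by rewrite -mulrA mulr_suml mulr_sumr; apply: eq_bigr => b _; rewrite !mulrA.
Qed.

Lemma Esb_condsb k h f : E h (Csb k h f) = E (h + k) f.
Proof.
by elim: k h => [|k IH] h; rewrite ?addn0 // Esb_condsbS IH addSnnS.
Qed.

Lemma Esb_nu_avg h F : (h < H)%N ->
  E h (fun s _ => \sum_b nu h s b * F s b) = E h F.
Proof.
move=> hH; rewrite /Esb; apply: eq_bigr => s _; congr (_ * _).
by rewrite -mulr_suml nupi_sum1 // mul1r.
Qed.

(* [discounted w F h s b] is E_(s_h = s, b_h = b) [\sum_(l >= h) w^(l - h) F_l(s_l, b_l)]. *)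
Definition discounted (w : R) (F : nat -> S -> B -> R) (h : nat) (s : S) (b : B) : R :=
  \sum_(h <= l < H) w ^+ (l - h) * Csb (l - h) h (F l) s b.

Lemma discounted_rec w F h s b : (h < H)%N ->
  discounted w F h s b = F h s b + w * Pop P pi h
    (fun s' => \sum_b' nu h.+1 s' b' * discounted w F h.+1 s' b') s b.
Proof.
move=> hH; rewrite /discounted big_ltn // subnn expr0 mul1r; congr (_ + _).
transitivity (\sum_(h.+1 <= l < H) w * \sum_s' Ppi P pi h s b s' *
   \sum_b' nu h.+1 s' b' * (w ^+ (l - h.+1) * Csb (l - h.+1) h.+1 (F l) s' b')).
  apply: eq_big_nat => l /andP[hl _]; rewrite -(subnSK hl) exprS -mulrA /=.
  congr (_ * _); rewrite mulr_sumr; apply: eq_bigr => s' _; rewrite mulrCA.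
  by congr (_ * _); rewrite mulr_sumr; apply: eq_bigr => b' _; rewrite mulrCA.
rewrite -mulr_sumr /Pop exchange_big; congr (_ * _); apply: eq_bigr => s' _ /=.
rewrite -mulr_sumr exchange_big; congr (_ * _); apply: eq_bigr => b' _ /=.
by rewrite mulr_sumr.
Qed.

Lemma discounted_ge0 w F h s b : 0 <= w ->
  (forall l s b, (l < H)%N -> 0 <= F l s b) -> 0 <= discounted w F h s b.
Proof.
move=> w_ge0 F_ge0; rewrite /discounted big_nat_cond sumr_ge0 // => l.
case/andP=> /andP[hl lH] _; rewrite mulr_ge0 ?exprn_ge0 //.
by apply: condsb_ge0 => [|s' b']; [lia | exact: F_ge0].
Qed.

Lemma Esb_discounted w F h :
  E h (discounted w F h) = \sum_(h <= l < H) w ^+ (l - h) * E l (F l).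
Proof.
rewrite Esb_sum big_nat_cond [RHS]big_nat_cond.
apply: eq_bigr => l /andP[/andP[hl _] _].
by rewrite EsbZ Esb_condsb subnKC.
Qed.

Lemma discountedD w F G h s b :
  discounted w (fun l s b => F l s b + G l s b) h s b =
  discounted w F h s b + discounted w G h s b.
Proof. by rewrite /discounted -big_split; apply: eq_bigr => l _; rewrite condsbD mulrDr. Qed.

(** * Error propagation for an estimated Q-function *)

Section EstimatedQ.
Context {Qt : nat -> S -> B -> R}.
Local Notation g := (gres H eta gamma P r pi Qt).
Local Notation Delta := (Delta1 H eta gamma P r pi Qt).

Definition dQ h s b := Qt h s b - Q h s b.
Definition dV h s := Vt H eta Qt h s - V h s.
Definition dA h s b := At H eta Qt h s b - Api H eta gamma P r pi h s b.
(* [eta * kappa h s] is KL(nu^pi_h(s) || nu~_h(s)), see [kappa_lse_gap]. *)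
Definition kappa h s := dV h s - \sum_b nu h s b * dQ h s b.

Lemma nut_softmax h s b : (h < H)%N -> nut H eta Qt h s b = softmax eta (Qt h s) b.
Proof. by move=> hH; rewrite /nut /At /Vt hH. Qed.

Lemma dV_lse h s : (h < H)%N -> dV h s = lse eta (Qt h s) - lse eta (Q h s).
Proof. by move=> hH; rewrite /dV /Vt hH Vpi_lse. Qed.

Lemma dA_lse h s b : (h < H)%N ->
  dA h s b = Qt h s b - lse eta (Qt h s) - (Q h s b - lse eta (Q h s)).
Proof. by move=> hH; rewrite /dA /At /Api /Vt hH Vpi_lse. Qed.

Lemma dA_dQ_dV h s b : dA h s b = dQ h s b - dV h s.
Proof. by rewrite /dA /At /Api /dQ /dV; ring. Qed.

Lemma kappa_lse_gap h s : (h < H)%N -> kappa h s = lse_gap eta (Q h s) (Qt h s).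
Proof.
move=> hH; rewrite /kappa /lse_gap dV_lse //; congr (_ - _).
by apply: eq_bigr => b _; rewrite nupi_softmax.
Qed.

Lemma kappa_ge0 h s : (h < H)%N -> 0 <= kappa h s.
Proof. by move=> hH; rewrite kappa_lse_gap //; apply: lse_gap_ge0. Qed.

Lemma dV_ge_H h s : (H <= h)%N -> dV h s = 0.
Proof.
move=> hH; rewrite /dV /Vt ltnNge hH /Vpi (_ : (H - h = 0)%N) /= ?subr0 //.
by apply/eqP; rewrite subn_eq0.
Qed.

Lemma dQ_bellman h s b : dQ h s b = g h s b + gamma * Pop P pi h (dV h.+1) s b.
Proof.
have -> : Pop P pi h (dV h.+1) s b =
          Pop P pi h (Vt H eta Qt h.+1) s b - Pop P pi h (V h.+1) s b.
  by rewrite /Pop -sumrB; apply: eq_bigr => s' _; rewrite mulrBr.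
by rewrite /dQ /gres /Qpi; ring.
Qed.

Local Notation kap := (fun l s (b : B) => kappa l s).
Local Notation g_kap := (fun l s b => g l s b + kappa l s).

Lemma dQ_add_kappa_step h s b : (h < H)%N ->
  (forall s', dV h.+1 s' = \sum_b' nu h.+1 s' b' * discounted gamma g_kap h.+1 s' b') ->
  dQ h s b + kappa h s = discounted gamma g_kap h s b.
Proof.
move=> hH dV_next; rewrite discounted_rec // dQ_bellman /Pop.
by under [in RHS]eq_bigr do rewrite -dV_next; ring.
Qed.

Lemma dV_discounted h s : dV h s = \sum_b nu h s b * discounted gamma g_kap h s b.
Proof.
elim/(nat_backward_ind H): h s => [h hH | h hH dV_next] s.
  by rewrite dV_ge_H // big1 // => b _; rewrite /discounted big_geq // mulr0.
under eq_bigr do rewrite -dQ_add_kappa_step // mulrDr.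
by rewrite big_split /= -mulr_suml nupi_sum1 // mul1r /kappa; ring.
Qed.

Lemma dQ_add_kappa h s b : (h < H)%N ->
  dQ h s b + kappa h s = discounted gamma g_kap h s b.
Proof. by move=> hH; apply: dQ_add_kappa_step => // s'; apply: dV_discounted. Qed.

Lemma Delta1E h s b :
  Delta h s b =
  discounted gamma g h s b - \sum_b' nu h s b' * discounted gamma g h s b'.
Proof.
rewrite /Delta1 /discounted /conds; under eq_bigr do rewrite mulrBr.
rewrite sumrB; congr (_ - _); under [RHS]eq_bigr do rewrite mulr_sumr.
rewrite [RHS]exchange_big; apply: eq_bigr => l _ /=; rewrite mulr_sumr.
by apply: eq_bigr => b' _; rewrite mulrCA.
Qed.

Lemma dA_decomp h s b : (h < H)%N ->
  dA h s b = Delta h s b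
    + (discounted gamma kap h s b - \sum_b' nu h s b' * discounted gamma kap h s b')
    - kappa h s.
Proof.
move=> hH; rewrite dA_dQ_dV -[dQ _ _ _](addrK (kappa h s)) dQ_add_kappa //.
rewrite dV_discounted Delta1E discountedD.
under eq_bigr do rewrite discountedD mulrDr.
by rewrite big_split /=; ring.
Qed.

Lemma Esb_norm_dA_le h : (h < H)%N ->
  E h (fun s b => `|dA h s b|) <=
  E h (fun s b => `|Delta h s b|) + 2 * \sum_(h <= l < H) gamma ^+ (l - h) * E l (kap l)
  + E h (kap h).
Proof.
move=> hH; pose D s b := discounted gamma kap h s b.
have D_ge0 s b : 0 <= D s b.
  by apply: discounted_ge0 => // l s' b' lH; apply: kappa_ge0.
apply: le_trans (_ : _ <= E h (fun s b => `|Delta h s b|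
    + (D s b + \sum_b' nu h s b' * D s b') + kappa h s)) _.
  apply: Esb_le (ltnW hH) _ => s b; rewrite dA_decomp //.
  apply: le_trans (ler_normB _ _) _; rewrite (ger0_norm (kappa_ge0 h s hH)) lerD2r.
  apply: le_trans (ler_normD _ _) _; rewrite lerD2l.
  apply: le_trans (ler_normB _ _) _; rewrite !ger0_norm //.
  by apply: sumr_ge0 => b' _; rewrite mulr_ge0 ?nupi_ge0.
by rewrite !EsbD Esb_nu_avg // Esb_discounted; lra.
Qed.

Lemma sum_Esb_norm_dA_le :
  \sum_(h < H) E h (fun s b => `|dA h s b|) <=
  \sum_(h < H) E h (fun s b => `|Delta h s b|)
  + (2 * eff H gamma + 1) * \sum_(h < H) E h (kap h).
Proof.
have Ekappa_ge0 l : (l < H)%N -> 0 <= E l (kap l).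
  by move=> lH; apply: Esb_ge0 (ltnW lH) _ => s b; apply: kappa_ge0.
have := sum_discounted_le H gamma gamma_ge0 _ Ekappa_ge0; rewrite !big_mkord => disc_le.
apply: le_trans (ler_sum _ (fun h _ => Esb_norm_dA_le _ (ltn_ord h))) _.
by rewrite !big_split /= -mulr_sumr; lra.
Qed.

Section BoundedAdvantages.
Context {BA : R}.
Hypotheses (At_bound : forall h s b, (h < H)%N -> `|At H eta Qt h s b| <= BA)
  (Api_bound : forall h s b, (h < H)%N -> `|Api H eta gamma P r pi h s b| <= BA).
Local Notation c := (2 * eta * BA).

Lemma eta_dA_bound h s b : (h < H)%N -> `|eta * dA h s b| <= c.
Proof.
move=> hH; rewrite normrM gtr0_norm // [2 * eta]mulrC -mulrA ler_pM2l //.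
have := ler_normB (At H eta Qt h s b) (Api H eta gamma P r pi h s b).
by have := At_bound h s b hH; have := Api_bound h s b hH; rewrite /dA; lra.
Qed.

Lemma kappa_le h s : (h < H)%N ->
  kappa h s <= eta / 2 * expR c * \sum_b nu h s b * dA h s b ^+ 2.
Proof.
move=> hH; rewrite kappa_lse_gap //.
under eq_bigr do rewrite nupi_softmax // dA_lse //.
by apply: lse_gap_le eta eta_gt0 b0 _ _ _ _ => b; rewrite -dA_lse //; apply: eta_dA_bound.
Qed.

Lemma Esb_kappa_le h : (h < H)%N ->
  E h (kap h) <= eta / 2 * expR c * E h (fun s b => dA h s b ^+ 2).
Proof.
move=> hH; apply: le_trans (Esb_le _ _ _ (ltnW hH) (fun s _ => kappa_le h s hH)) _.
by rewrite EsbZ Esb_nu_avg.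
Qed.

Lemma l1_nut_nupi_le h s : (h < H)%N ->
  \sum_b `|nut H eta Qt h s b - nu h s b| <=
  \sum_b nu h s b * (eta * `|dA h s b| + expR c / 2 * eta ^+ 2 * dA h s b ^+ 2).
Proof.
move=> hH; under eq_bigr do rewrite nut_softmax // nupi_softmax //.
under [X in _ <= X]eq_bigr do rewrite nupi_softmax // dA_lse //.
by apply: softmax_l1_le eta eta_gt0 _ _ _ _ => b; rewrite -dA_lse //; apply: eta_dA_bound.
Qed.

Lemma Es_l1_le h : (h < H)%N ->
  Es H eta gamma P r pi rho h (fun s => \sum_b `|nut H eta Qt h s b - nu h s b|) <=
  eta * E h (fun s b => `|dA h s b|) + expR c / 2 * eta ^+ 2 * E h (fun s b => dA h s b ^+ 2).
Proof.
move=> hH; rewrite -!EsbZ -EsbD; apply: ler_sum => s _.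
by apply: ler_wpM2l; [apply: dpi_ge0; apply: ltnW | apply: l1_nut_nupi_le].
Qed.

Local Notation Delta_sum := (\sum_(h < H) E h (fun s b => `|Delta h s b|)).
Local Notation dA2_sum := (\sum_(h < H) E h (fun s b => dA h s b ^+ 2)).

Lemma sum_Es_l1_le :
  \sum_(h < H) Es H eta gamma P r pi rho h (fun s => \sum_b `|nut H eta Qt h s b - nu h s b|)
  <= eta * Delta_sum + eta ^+ 2 * expR c * (1 + eff H gamma) * dA2_sum.
Proof.
have sum_Ekappa_le : \sum_(h < H) E h (kap h) <= eta / 2 * expR c * dA2_sum.
  by rewrite mulr_sumr; apply: ler_sum => h _; apply: Esb_kappa_le.
have eff_gamma_ge0 := eff_ge0 H gamma gamma_ge0.
have dA_le : eta * \sum_(h < H) E h (fun s b => `|dA h s b|) <=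
    eta * (Delta_sum + (2 * eff H gamma + 1) * (eta / 2 * expR c * dA2_sum)).
  rewrite ler_pM2l //; apply: le_trans sum_Esb_norm_dA_le _.
  by rewrite lerD2l ler_wpM2l // addr_ge0 ?mulr_ge0.
apply: le_trans (ler_sum _ (fun h _ => Es_l1_le _ (ltn_ord h))) _.
by rewrite big_split /= -!mulr_sumr; lra.
Qed.

Lemma norm_dV_le_dQ h s : (h < H)%N ->
  `|dV h s| <= expR c * \sum_b nu h s b * `|dQ h s b|.
Proof.
move=> hH; rewrite dV_lse //; under eq_bigr do rewrite nupi_softmax //.
apply: norm_lse_diff_le eta eta_gt0 b0 _ _ _ _ => b.
by rewrite -dA_lse //; apply: eta_dA_bound.
Qed.

Lemma norm_Pop_le h f G s b : (h < H)%N -> (forall s', `|f s'| <= G s') ->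
  `|Pop P pi h f s b| <= Pop P pi h G s b.
Proof.
move=> hH fG; apply: le_trans (ler_norm_sum _ _ _) _; apply: ler_sum => s' _.
by rewrite normrM ger0_norm ?Ppi_ge0 // ler_wpM2l ?Ppi_ge0.
Qed.

Lemma PopZ h a f s b : Pop P pi h (fun s' => a * f s') s b = a * Pop P pi h f s b.
Proof. by rewrite /Pop mulr_sumr; apply: eq_bigr => s' _; rewrite mulrCA. Qed.

(* each backward step costs the factor [expR c] of [norm_dV_le_dQ] *)
Local Notation w := (expR c * gamma).
Local Notation Gabs := (discounted w (fun l s b => `|g l s b|)).

Lemma Gabs_ge0 h s b : 0 <= Gabs h s b.
Proof. by apply: discounted_ge0 => *; rewrite ?mulr_ge0 ?expR_ge0. Qed.

Lemma norm_dQ_le_step h s b : (h < H)%N ->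
  (forall s', `|dV h.+1 s'| <= expR c * \sum_b' nu h.+1 s' b' * Gabs h.+1 s' b') ->
  `|dQ h s b| <= Gabs h s b.
Proof.
move=> hH dV_next; rewrite dQ_bellman discounted_rec //.
apply: le_trans (ler_normD _ _) _; rewrite lerD2l normrM ger0_norm //.
rewrite -[_ * gamma * _]mulrA mulrCA ler_wpM2l // -PopZ.
by apply: norm_Pop_le => // s'; apply: dV_next.
Qed.

Lemma norm_dV_le h s : `|dV h s| <= expR c * \sum_b nu h s b * Gabs h s b.
Proof.
elim/(nat_backward_ind H): h s => [h hH | h hH dV_next] s.
  rewrite dV_ge_H // normr0 mulr_ge0 ?expR_ge0 // sumr_ge0 // => b _.
  by rewrite mulr_ge0 ?nupi_ge0 ?Gabs_ge0.
apply: le_trans (norm_dV_le_dQ h s hH) _; rewrite ler_wpM2l ?expR_ge0 //.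
apply: ler_sum => b _; rewrite ler_wpM2l ?nupi_ge0 //.
exact: norm_dQ_le_step.
Qed.

Lemma norm_dQ_le h s b : (h < H)%N -> `|dQ h s b| <= Gabs h s b.
Proof. by move=> hH; apply: norm_dQ_le_step => // s'; apply: norm_dV_le. Qed.

Lemma sqr_Gabs_le h s b : (h < H)%N ->
  Gabs h s b ^+ 2 <= eff H w * discounted w (fun l s b => `|g l s b| ^+ 2) h s b.
Proof.
move=> hH; have w_ge0 : 0 <= w by rewrite mulr_ge0 ?expR_ge0.
have pow_ge0 l : 0 <= w ^+ (l - h) by rewrite exprn_ge0.
apply: le_trans (sqr_wsum_le _ _ _ pow_ge0) _.
apply: ler_pM; first by rewrite sumr_ge0.
- by rewrite sumr_ge0 // => l _; rewrite mulr_ge0 ?sqr_ge0.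
- exact: sum_shifted_geom_le_eff (ltnW hH).
rewrite big_nat_cond [X in _ <= X]big_nat_cond; apply: ler_sum => l.
case/andP=> /andP[hl lH] _; rewrite ler_wpM2l //.
by apply: sqr_condsb_le; lia.
Qed.

Local Notation g2_max := (\big[Num.max/0]_(l < H) E l (fun s b => `|g l s b| ^+ 2)).

Lemma Esb_sqr_dQ_le h : (h < H)%N ->
  E h (fun s b => dQ h s b ^+ 2) <= eff H w ^+ 2 * g2_max.
Proof.
move=> hH; have w_ge0 : 0 <= w by rewrite mulr_ge0 ?expR_ge0.
have dQ2_le s b :
    dQ h s b ^+ 2 <= eff H w * discounted w (fun l s b => `|g l s b| ^+ 2) h s b.
  apply: le_trans (sqr_Gabs_le _ _ _ hH); rewrite -real_normK ?num_real //.
  by apply: lerXn2r; rewrite ?nnegrE ?normr_ge0 ?Gabs_ge0 ?norm_dQ_le.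
apply: le_trans (Esb_le _ _ _ (ltnW hH) dQ2_le) _.
rewrite EsbZ Esb_discounted expr2 -[X in _ <= X]mulrA.
apply: ler_wpM2l; first exact: eff_ge0.
apply: le_trans (_ : _ <= \sum_(h <= l < H) w ^+ (l - h) * g2_max) _.
  rewrite big_nat_cond [X in _ <= X]big_nat_cond; apply: ler_sum => l.
  case/andP=> /andP[_ lH] _; apply: ler_wpM2l; first exact: exprn_ge0.
  exact: (le_bigmax _ _ (Ordinal lH)).
rewrite -mulr_suml; apply: ler_wpM2r; first exact: bigmax_ge_id.
exact: sum_shifted_geom_le_eff (ltnW hH).
Qed.

Lemma Esb_sqr_dA_le h : (h < H)%N ->
  E h (fun s b => dA h s b ^+ 2) <= 4 * expR c ^+ 2 * E h (fun s b => dQ h s b ^+ 2).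
Proof.
move=> hH; rewrite -(Esb_nu_avg _ (fun s b => dA h s b ^+ 2) hH).
rewrite -(Esb_nu_avg _ (fun s b => dQ h s b ^+ 2) hH) -EsbZ.
apply: Esb_le (ltnW hH) _ => s _.
under eq_bigr do rewrite nupi_softmax // dA_lse //.
under [X in _ <= _ * X]eq_bigr do rewrite nupi_softmax //.
apply: sum_softmax_sqr_dadv_le eta eta_gt0 b0 _ _ _ _ => b.
by rewrite -dA_lse //; apply: eta_dA_bound.
Qed.

Lemma sum_Esb_sqr_dA_le :
  dA2_sum <= H%:R * (4 * expR c ^+ 2 * (eff H w ^+ 2 * g2_max)).
Proof.
apply: le_trans (_ : _ <= \sum_(h < H) 4 * expR c ^+ 2 * (eff H w ^+ 2 * g2_max)) _.
  apply: ler_sum => h _; apply: le_trans (Esb_sqr_dA_le _ (ltn_ord h)) _.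
  by apply: ler_wpM2l; [rewrite mulr_ge0 ?exprn_ge0 ?expR_ge0 | apply: Esb_sqr_dQ_le].
by rewrite sumr_const card_ord [X in _ <= X]mulr_natl.
Qed.


Lemma sum_H_Es_l1_le :
  \sum_(h < H) H%:R * Es H eta gamma P r pi rho h
      (fun s => \sum_b `|nut H eta Qt h s b - nu h s b|)
  <= H%:R * (eta * Delta_sum + eta ^+ 2 * expR c * (1 + eff H gamma) * dA2_sum).
Proof. by rewrite -mulr_sumr ler_wpM2l ?ler0n // sum_Es_l1_le. Qed.

Lemma sum_Esb_norm_Delta_ge0 : 0 <= Delta_sum.
Proof.
by apply: sumr_ge0 => h _; apply: Esb_ge0 (ltnW (ltn_ord h)) _ => s b; apply: normr_ge0.
Qed.

Lemma sum_Esb_sqr_dA_ge0 : 0 <= dA2_sum.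
Proof.
by apply: sumr_ge0 => h _; apply: Esb_ge0 (ltnW (ltn_ord h)) _ => s b; apply: sqr_ge0.
Qed.

Lemma sum_l1_le_adv_error :
  \sum_(h < H) H%:R * Es H eta gamma P r pi rho h
      (fun s => \sum_b `|nut H eta Qt h s b - nu h s b|)
  <= 2 * eta * H%:R * Delta_sum + eta ^+ 2 * H%:R * (1 + 4 * eff H gamma) * expR c
     * \sum_(h < H) E h (fun s b => `|dA h s b| ^+ 2).
Proof.
have -> : \sum_(h < H) E h (fun s b => `|dA h s b| ^+ 2) = dA2_sum.
  by apply: eq_bigr => h _; apply: Esb_ext => s b; rewrite real_normK ?num_real.
apply: le_trans sum_H_Es_l1_le _.
have HDelta_ge0 : 0 <= H%:R * eta * Delta_sum.
  by rewrite !mulr_ge0 ?ler0n ?sum_Esb_norm_Delta_ge0 ?(ltW eta_gt0).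
have HdA2_ge0 : 0 <= eff H gamma * (H%:R * eta ^+ 2 * expR c * dA2_sum).
  by rewrite !mulr_ge0 ?eff_ge0 ?ler0n ?expR_ge0 ?sum_Esb_sqr_dA_ge0 ?(ltW eta_gt0).
lra.
Qed.

Hypothesis H_gt0 : (0 < H)%N.

Lemma sum_l1_le_bellman_residual :
  \sum_(h < H) H%:R * Es H eta gamma P r pi rho h
      (fun s => \sum_b `|nut H eta Qt h s b - nu h s b|)
  <= 2 * eta * H%:R * Delta_sum + 2 * eta ^+ 2 * H%:R ^+ 2 * expR (6 * eta * BA)
     * (1 + 4 * eff H gamma) * eff H w ^+ 2 * g2_max.
Proof.
have expR6 : expR (6 * eta * BA) = expR c ^+ 3.
  by rewrite -expRM_natl; congr expR; ring.
set T := eta ^+ 2 * H%:R ^+ 2 * expR c ^+ 3 * eff H w ^+ 2 * g2_max.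
have w_ge0 : 0 <= w by rewrite mulr_ge0 ?expR_ge0.
have T_ge0 : 0 <= T.
  rewrite /T !mulr_ge0 ?ler0n ?exprn_ge0 ?expR_ge0 ?(ltW eta_gt0) ?(eff_ge0 H w w_ge0) //.
  exact: bigmax_ge_id.
have dA2_term :
    H%:R * eta ^+ 2 * expR c * (1 + eff H gamma) * dA2_sum <= 4 * (1 + eff H gamma) * T.
  have -> : 4 * (1 + eff H gamma) * T = H%:R * eta ^+ 2 * expR c * (1 + eff H gamma)
      * (H%:R * (4 * expR c ^+ 2 * (eff H w ^+ 2 * g2_max))) by rewrite /T; ring.
  apply: ler_wpM2l sum_Esb_sqr_dA_le.
  by rewrite !mulr_ge0 ?ler0n ?expR_ge0 ?(ltW eta_gt0) ?addr_ge0 ?(eff_ge0 H gamma gamma_ge0).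
have eff_ge1 := eff_ge1 H gamma gamma_ge0 H_gt0.
have HDelta_ge0 : 0 <= H%:R * eta * Delta_sum.
  by rewrite !mulr_ge0 ?ler0n ?sum_Esb_norm_Delta_ge0 ?(ltW eta_gt0).
apply: le_trans sum_H_Es_l1_le _.
have -> : 2 * eta ^+ 2 * H%:R ^+ 2 * expR (6 * eta * BA) * (1 + 4 * eff H gamma)
    * eff H w ^+ 2 * g2_max = 2 * (1 + 4 * eff H gamma) * T by rewrite expR6 /T; ring.
(* [eff H gamma >= 1] turns [4 * (1 + eff H gamma)] into [2 * (1 + 4 * eff H gamma)] *)
have : 0 <= (eff H gamma - 1) * T by rewrite mulr_ge0 // subr_ge0.
lra.
Qed.

End BoundedAdvantages.
End EstimatedQ.
End Trajectory.

Theorem mainTheorem4 (R : realType) (S A B : finType) (H : nat) (eta gamma : R)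
  (P : nat -> S -> A -> B -> S -> R) (r : nat -> S -> A -> B -> R)
  (pi : nat -> S -> B -> A -> R) (rho : S -> R)
  (Qt : nat -> S -> B -> R) (BA : R) :
  0 < eta -> 0 <= gamma <= 1 ->
  (forall h s a b s', (h < H)%N -> 0 <= P h s a b s') ->
  (forall h s a b, (h < H)%N -> \sum_s' P h s a b s' = 1) ->
  (forall h s a b, (h < H)%N -> 0 <= r h s a b <= 1) ->
  (forall h s b a, (h < H)%N -> 0 <= pi h s b a) ->
  (forall h s b, (h < H)%N -> \sum_a pi h s b a = 1) ->
  (forall s, 0 <= rho s) -> \sum_s rho s = 1 ->
  0 < BA ->
  (forall h s b, (h < H)%N ->
     [/\ `|Qpi H eta gamma P r pi h s b| <= BA,
         `|Vpi H eta gamma P r pi h s| <= BA &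
         `|Api H eta gamma P r pi h s b| <= BA] /\
     [/\ `|Qt h s b| <= BA,
         `|Vt H eta Qt h s| <= BA &
         `|At H eta Qt h s b| <= BA]) ->
  let C0 := 2 * eta * H%:R in
  let C1 := eta ^+ 2 * H%:R * (1 + 4 * eff H gamma) * expR (2 * eta * BA) in
  let C2 := 2 * eta ^+ 2 * H%:R ^+ 2 * expR (6 * eta * BA) * (1 + 4 * eff H gamma)
            * (eff H (expR (2 * eta * BA) * gamma)) ^+ 2 in
  let lhs := \sum_(h < H) H%:R * Es H eta gamma P r pi rho h
                 (fun s => \sum_b `|nut H eta Qt h s b - nupi H eta gamma P r pi h s b|) in
  let D := \sum_(h < H) Esb H eta gamma P r pi rho h
                 (fun s b => `|Delta1 H eta gamma P r pi Qt h s b|) in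
  lhs <= C0 * D + C1 * \sum_(h < H) Esb H eta gamma P r pi rho h
                 (fun s b => `|At H eta Qt h s b - Api H eta gamma P r pi h s b| ^+ 2)
  /\
  lhs <= C0 * D + C2 * \big[Num.max/0]_(h < H) Esb H eta gamma P r pi rho h
                 (fun s b => `|gres H eta gamma P r pi Qt h s b| ^+ 2).
Proof.
move=> eta_gt0 /andP[gamma_ge0 _] P_ge0 P_sum1 _ pi_ge0 pi_sum1 rho_ge0 _ _ bounds; cbv zeta.
have At_bound h s b : (h < H)%N -> `|At H eta Qt h s b| <= BA.
  by move=> hH; have [_ [_ _ ?]] := bounds h s b hH.
have Api_bound h s b : (h < H)%N -> `|Api H eta gamma P r pi h s b| <= BA.
  by move=> hH; have [[_ _ ?] _] := bounds h s b hH.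
have [H0 | H_gt0] := posnP H.
  by subst H; rewrite !big_ord0 !mulr0 addr0; split.
have [b0 _ | noB] := pickP (@predT B).
  have bound_adv := sum_l1_le_adv_error eta_gt0 gamma_ge0 P_ge0 pi_ge0 rho_ge0 b0
    At_bound Api_bound.
  have bound_res := sum_l1_le_bellman_residual eta_gt0 gamma_ge0 P_ge0 P_sum1 pi_ge0
    pi_sum1 rho_ge0 b0 At_bound Api_bound H_gt0.
  by split.
have sum0 (F : B -> R) : \sum_b F b = 0 by apply: big_pred0.
have E0 h F : Esb H eta gamma P r pi rho h F = 0.
  by rewrite /Esb big1 // => s _; rewrite sum0 mulr0.
have max0 : \big[Num.max/0]_(h < H) Esb H eta gamma P r pi rho h
    (fun s b => `|gres H eta gamma P r pi Qt h s b| ^+ 2) = 0.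
  apply: (big_ind (fun x : R => x = 0)) => [//|x y -> ->|h _]; [exact: maxxx | exact: E0].
rewrite max0 !big1 => [|h _|h _|h _]; try exact: E0.
  by rewrite !mulr0 addr0; split.
by rewrite /Es big1 ?mulr0 // => s _; rewrite sum0 mulr0.
Qed.
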